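(* Let $G$ be a graph formed from the paw $K_{1,3}+e$ (a triangle together with one pendent edge attached to a vertex of the triangle) by subdividing the pendent edge $0$ or more times. If $L$ is a list-assignment with $|L(v)|\ge\deg(v)+1$ for all $v\in V(G)$ and $\alpha,\beta$ are unfrozen $L$-colourings, then $\alpha\sim\beta$.
   Context: An $L$-colouring is a proper colouring $\varphi$ with $\varphi(v)\in L(v)$ for all $v$. A vertex $v$ is frozen under $\varphi$ if every colour of $L(v)\setminus\{\varphi(v)\}$ appears on a neighbour of $v$; a colouring is unfrozen if at least one vertex is not frozen. $\alpha\sim\beta$ means $\alpha$ can be transformed into $\beta$ by a sequence of single-vertex recolouring steps, each keeping the colouring a proper $L$-colouring. *)

From mathcomp Require Import all_boot.
From Stdlib Require Import Relations.Relation_Operators.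
Set Implicit Arguments. Unset Strict Implicit. Unset Printing Implicit Defensive.

(* Adjacency of the paw with its pendent edge subdivided k times, on 'I_(k+4):
   vertices 0,1,2 form a triangle; 2 - 3 - 4 - ... - (k+3) is the
   (subdivided) pendent path attached to vertex 2. *)
Definition paw_sub_adj (k : nat) : rel 'I_(k + 4) :=
  fun i j =>
    [|| ((i < 3) && (j < 3) && (i != j)),
        ((3 <= j) && (i.+1 == j)) | ((3 <= i) && (j.+1 == i))].

Definition simple_graph (T : finType) (e : rel T) : Prop :=
  symmetric e /\ irreflexive e.

Definition deg (T : finType) (e : rel T) (v : T) : nat := #|[set u | e v u]|.

Definition L_colouring (T C : finType) (e : rel T) (L : T -> {set C})
  (phi : T -> C) : Prop :=
  (forall v, phi v \in L v) /\ (forall u v, e u v -> phi u != phi v).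

Definition frozen (T C : finType) (e : rel T) (L : T -> {set C})
  (phi : T -> C) (v : T) : Prop :=
  forall c, c \in L v -> c != phi v -> exists u, e v u /\ phi u = c.

Definition unfrozen (T C : finType) (e : rel T) (L : T -> {set C})
  (phi : T -> C) : Prop :=
  exists v, ~ frozen e L phi v.

Definition recolour_step (T C : finType) (e : rel T) (L : T -> {set C})
  (phi psi : T -> C) : Prop :=
  L_colouring e L phi /\ L_colouring e L psi /\
  exists v, forall w, w != v -> phi w = psi w.

Definition reconf (T C : finType) (e : rel T) (L : T -> {set C})
  (alpha beta : T -> C) : Prop :=
  clos_refl_trans (T -> C) (recolour_step e L) alpha beta.

From mathcomp Require Import all_boot zify.
From Stdlib Require Import Relations Classical FunctionalExtensionality.
Set Implicit Arguments. Unset Strict Implicit. Unset Printing Implicit Defensive.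

(* Call v0 v1 v2 the triangle, v2 being attached to the path v3 ... v(k+3).
   Once v3 has colour q, recolouring the triangle is reconfiguring list
   colourings of K3 with lists L(v0), L(v1), L(v2) minus q, all of size at
   least 3; these colourings are connected unless the three lists are one and
   the same 3-set, in which case every triangle vertex is frozen. Call q rigid
   then; at most one colour is rigid. An unfrozen colouring reaches one where
   the colour of v3 is not rigid: otherwise the unfrozen vertex lies on the
   path, and recolourings pushed along the path towards v3 change the colour
   of v3. Two such flexible colourings are connected: copy the target onto the
   path from its far end (when v4 needs the colour of v3, first move v3, with
   the triangle rearranged to free a colour), then fix v3, then the triangle. *)

Lemma clos_rt_map (X Y : Type) (R : relation X) (R' : relation Y) (h : X -> Y) :
  (forall s t, R s t -> R' (h s) (h t)) ->
  forall s t, clos_refl_trans X R s t -> clos_refl_trans Y R' (h s) (h t).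
Proof.
move=> hR s t; elim=> [x y /hR|x|x y z _ Hxy _ Hyz]; first exact: rt_step.
- exact: rt_refl.
- exact: rt_trans Hxy Hyz.
Qed.

Lemma clos_rt_sym (X : Type) (R : relation X) :
  (forall s t, R s t -> R t s) ->
  forall s t, clos_refl_trans X R s t -> clos_refl_trans X R t s.
Proof.
move=> hR s t; elim=> [x y /hR|x|x y z _ Hyx _ Hzy]; first exact: rt_step.
- exact: rt_refl.
- exact: rt_trans Hzy Hyx.
Qed.

Lemma clos_rt_inv (X : Type) (R : relation X) (I : X -> Prop) :
  (forall s t, R s t -> I t) -> forall s t, clos_refl_trans X R s t -> I s -> I t.
Proof. by move=> hR s t; elim=> [x y /hR|x|x y z _ H1 _ H2] // /H1 /H2. Qed.

Lemma exists_avoiding (C : finType) (S : {set C}) (s : seq C) :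
  size s < #|S| -> exists2 w, w \in S & w \notin s.
Proof.
move=> lt_s_S; apply/subsetPn; apply: contraTN lt_s_S => sub_S_s.
by rewrite -leqNgt (leq_trans (subset_leq_card sub_S_s)) ?card_size.
Qed.

Lemma card_le3_mem (C : finType) (S : {set C}) (a b c w : C) : #|S| <= 3 ->
  a \in S -> b \in S -> c \in S -> uniq [:: a; b; c] -> w \in S -> w \in [:: a; b; c].
Proof.
move=> le3 ha hb hc uabc hw; apply: contraLR le3 => nw; rewrite -ltnNge.
have uw : uniq [:: w; a; b; c] by rewrite /= nw.
suff: #|[:: w; a; b; c]| <= #|S| by rewrite (card_uniqP uw).
by apply/subset_leq_card/subsetP => x; rewrite !inE => /or4P[] /eqP ->.
Qed.

Section Triangle.
Variable C : finType.
Implicit Types (A B D : {set C}) (x y z : C) (s t : C * C * C).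

Definition proper3 A B D t : bool :=
  [&& t.1.1 \in A, t.1.2 \in B, t.2 \in D,
      t.1.1 != t.1.2, t.1.1 != t.2 & t.1.2 != t.2].

Definition agree2 s t : Prop :=
  [\/ s.1.1 = t.1.1 /\ s.1.2 = t.1.2, s.1.1 = t.1.1 /\ s.2 = t.2
    | s.1.2 = t.1.2 /\ s.2 = t.2].

Definition recolour3 A B D s t : Prop :=
  [/\ proper3 A B D s, proper3 A B D t & agree2 s t].

Definition reconf3 A B D := clos_refl_trans _ (recolour3 A B D).

Lemma proper3P A B D x y z :
  reflect [/\ x \in A, y \in B, z \in D, x != y & (x != z) && (y != z)]
          (proper3 A B D (x, y, z)).
Proof. exact: and5P. Qed.

Lemma proper3I A B D x y z :
  x \in A -> y \in B -> z \in D -> x != y -> x != z -> y != z ->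
  proper3 A B D (x, y, z).
Proof. by move=> *; apply/proper3P; split=> //; apply/andP. Qed.

Lemma proper3_swap12 A B D x y z :
  proper3 A B D (x, y, z) = proper3 B A D (y, x, z).
Proof.
rewrite /proper3 /= [y == x]eq_sym.
by case: (x \in A); case: (y \in B); case: (x == z); case: (y == z).
Qed.

Lemma proper3_swap23 A B D x y z :
  proper3 A B D (x, y, z) = proper3 A D B (x, z, y).
Proof.
rewrite /proper3 /= [z == y]eq_sym.
by case: (y \in B); case: (z \in D); case: (x == y); case: (x == z).
Qed.

Lemma proper3_swap13 A B D x y z :
  proper3 A B D (x, y, z) = proper3 D B A (z, y, x).
Proof. by rewrite proper3_swap12 proper3_swap23 proper3_swap12. Qed.

Lemma reconf3_trans A B D s m t :
  reconf3 A B D s m -> reconf3 A B D m t -> reconf3 A B D s t.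
Proof. exact: rt_trans. Qed.

Lemma reconf3_sym A B D s t : reconf3 A B D s t -> reconf3 A B D t s.
Proof.
apply: clos_rt_sym => s' t' [ps pt same]; split=> //; rewrite /agree2.
by case: same => -[-> ->]; [constructor 1 | constructor 2 | constructor 3].
Qed.

Lemma reconf3_proper A B D s t : reconf3 A B D s t -> proper3 A B D s -> proper3 A B D t.
Proof. by apply: (clos_rt_inv (I := proper3 A B D)) => ? ? []. Qed.

Lemma reconf3_recolour1 A B D x y z x' :
  proper3 A B D (x, y, z) -> proper3 A B D (x', y, z) -> reconf3 A B D (x, y, z) (x', y, z).
Proof. by move=> p p'; apply: rt_step; split=> //; constructor 3. Qed.

Lemma reconf3_recolour2 A B D x y z y' :
  proper3 A B D (x, y, z) -> proper3 A B D (x, y', z) -> reconf3 A B D (x, y, z) (x, y', z).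
Proof. by move=> p p'; apply: rt_step; split=> //; constructor 2. Qed.

Lemma reconf3_recolour3 A B D x y z z' :
  proper3 A B D (x, y, z) -> proper3 A B D (x, y, z') -> reconf3 A B D (x, y, z) (x, y, z').
Proof. by move=> p p'; apply: rt_step; split=> //; constructor 1. Qed.

Lemma reconf3_swap12 A B D x y z x' y' z' :
  reconf3 B A D (y, x, z) (y', x', z') -> reconf3 A B D (x, y, z) (x', y', z').
Proof.
pose h (t : C * C * C) := (t.1.2, t.1.1, t.2).
apply: (@clos_rt_map _ _ _ _ h) => -[[a b] c] [[a' b'] c'] [ps pt same].
split; rewrite /= ?[proper3 A B D _]proper3_swap12 // /agree2.
by case: same => /= -[-> ->]; [constructor 1 | constructor 3 | constructor 2].
Qed.

Lemma reconf3_swap23 A B D x y z x' y' z' :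
  reconf3 A D B (x, z, y) (x', z', y') -> reconf3 A B D (x, y, z) (x', y', z').
Proof.
pose h (t : C * C * C) := (t.1.1, t.2, t.1.2).
apply: (@clos_rt_map _ _ _ _ h) => -[[a b] c] [[a' b'] c'] [ps pt same].
split; rewrite /= ?[proper3 A B D _]proper3_swap23 // /agree2.
by case: same => /= -[-> ->]; [constructor 2 | constructor 1 | constructor 3].
Qed.

Lemma reconf3_swap13 A B D x y z x' y' z' :
  reconf3 D B A (z, y, x) (z', y', x') -> reconf3 A B D (x, y, z) (x', y', z').
Proof. by move=> H; apply/reconf3_swap12/reconf3_swap23/reconf3_swap12. Qed.

Lemma reconf3_move1 A B D x y z x' : 4 <= #|D| ->
  proper3 A B D (x, y, z) -> x' \in A -> x' != y ->
  exists z', reconf3 A B D (x, y, z) (x', y, z').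
Proof.
move=> hD p hx' nx'y; have /proper3P[hx hy hz nxy /andP[nxz nyz]] := p.
have [ezx'|nzx'] := eqVneq z x'; last first.
  exists z; apply: reconf3_recolour1 => //.
  by apply: proper3I; rewrite // eq_sym.
subst x'; have [z' hz'] := exists_avoiding (s := [:: x; y; z]) hD.
rewrite !inE !negb_or => /and3P[nz'x nz'y nz'z].
have p' : proper3 A B D (x, y, z') by apply: proper3I; rewrite // eq_sym.
have p'' : proper3 A B D (z, y, z') by apply: proper3I; rewrite // eq_sym.
by exists z'; apply: reconf3_trans (reconf3_recolour3 p p') (reconf3_recolour1 p' p'').
Qed.

Lemma reconf3_move2 A B D x y z y' : 4 <= #|D| ->
  proper3 A B D (x, y, z) -> y' \in B -> y' != x ->
  exists z', reconf3 A B D (x, y, z) (x, y', z').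
Proof.
move=> hD p hy' ny'x; rewrite proper3_swap12 in p.
have [z' r] := reconf3_move1 hD p hy' ny'x.
by exists z'; apply: reconf3_swap12.
Qed.

Lemma reconf3_large A B D s t : 3 <= #|B| -> 4 <= #|D| ->
  proper3 A B D s -> proper3 A B D t -> reconf3 A B D s t.
Proof.
case: s t => [[x y] z] [[x' y'] z'] hB hD ps pt.
have /proper3P[hx' hy' hz' nx'y' _] := pt.
suff [z1 r] : exists z1, reconf3 A B D (x, y, z) (x', y', z1).
  exact: reconf3_trans r (reconf3_recolour3 (reconf3_proper r ps) pt).
have via1 u w c : proper3 A B D (u, w, c) -> x' != w ->
    exists z1, reconf3 A B D (u, w, c) (x', y', z1).
  move=> p nx'w; have [c1 r1] := reconf3_move1 hD p hx' nx'w.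
  have ny'x' : y' != x' by rewrite eq_sym.
  have [c2 r2] := reconf3_move2 hD (reconf3_proper r1 p) hy' ny'x'.
  by exists c2; apply: reconf3_trans r1 r2.
have [ex'y|nx'y] := eqVneq x' y; last exact: via1.
have [y2 hy2] := exists_avoiding (s := [:: x; y]) hB.
rewrite !inE negb_or => /andP[ny2x ny2y].
have [z2 r2] := reconf3_move2 hD ps hy2 ny2x.
have nx'y2 : x' != y2 by rewrite ex'y eq_sym.
have [z1 r1] := via1 _ _ _ (reconf3_proper r2 ps) nx'y2.
by exists z1; apply: reconf3_trans r2 r1.
Qed.

Lemma reconf3_to_third A B D d x y z : 3 <= #|A| -> 3 <= #|B| -> d \in D -> d \notin A ->
  proper3 A B D (x, y, z) -> exists x1 y1, reconf3 A B D (x, y, z) (x1, y1, d).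
Proof.
move=> hA hB hd ndA p; have /proper3P[hx hy hz nxy /andP[nxz nyz]] := p.
have ndx : d != x by apply: contraNneq ndA => ->.
have [edy|ndy] := eqVneq d y; last first.
  by exists x, y; apply: reconf3_recolour3 => //; apply: proper3I; rewrite // eq_sym.
subst d; have [y1 hy1] := exists_avoiding (s := [:: y; z]) hB.
rewrite !inE negb_or => /andP[ny1y ny1z].
have [ey1x|ny1x] := eqVneq y1 x; last first.
  have p1 : proper3 A B D (x, y1, z) by apply: proper3I; rewrite // eq_sym.
  have p2 : proper3 A B D (x, y1, y) by apply: proper3I; rewrite // eq_sym.
  by exists x, y1; apply: reconf3_trans (reconf3_recolour2 p p1) (reconf3_recolour3 p1 p2).
subst y1; have [x1 hx1] := exists_avoiding (s := [:: x; z]) hA.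
rewrite !inE negb_or => /andP[nx1x nx1z].
have nx1y : x1 != y by apply: contraNneq ndA => <-.
have p1 : proper3 A B D (x1, y, z) by apply: proper3I.
have p2 : proper3 A B D (x1, x, z) by apply: proper3I.
have p3 : proper3 A B D (x1, x, y) by apply: proper3I; rewrite // eq_sym.
exists x1, x; apply: reconf3_trans (reconf3_recolour1 p p1) _.
exact: reconf3_trans (reconf3_recolour2 p1 p2) (reconf3_recolour3 p2 p3).
Qed.

Lemma reconf3_fixed_third A B D d x y x' y' : 3 <= #|A| -> d \notin A ->
  proper3 A B D (x, y, d) -> proper3 A B D (x', y', d) ->
  reconf3 A B D (x, y, d) (x', y', d).
Proof.
move=> hA ndA p p'; have /proper3P[hx hy hd nxy /andP[nxd nyd]] := p.
have /proper3P[hx' hy' _ nx'y' /andP[nx'd ny'd]] := p'.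
have [ey'x|ny'x] := eqVneq y' x; last first.
  have p1 : proper3 A B D (x, y', d) by apply: proper3I; rewrite // eq_sym.
  exact: reconf3_trans (reconf3_recolour2 p p1) (reconf3_recolour1 p1 p').
subst y'; have [x1 hx1] := exists_avoiding (s := [:: x; y]) hA.
rewrite !inE negb_or => /andP[nx1x nx1y].
have nx1d : x1 != d by apply: contraNneq ndA => <-.
have p1 : proper3 A B D (x1, y, d) by apply: proper3I.
have p2 : proper3 A B D (x1, x, d) by apply: proper3I.
apply: reconf3_trans (reconf3_recolour1 p p1) _.
exact: reconf3_trans (reconf3_recolour2 p1 p2) (reconf3_recolour1 p2 p').
Qed.

Lemma reconf3_outside A B D d s t : 3 <= #|A| -> 3 <= #|B| -> d \in D -> d \notin A ->
  proper3 A B D s -> proper3 A B D t -> reconf3 A B D s t.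
Proof.
case: s t => [[x y] z] [[x' y'] z'] hA hB hd ndA ps pt.
have [x1 [y1 r]] := reconf3_to_third hA hB hd ndA ps.
have [x2 [y2 r']] := reconf3_to_third hA hB hd ndA pt.
have r1 := reconf3_fixed_third hA ndA (reconf3_proper r ps) (reconf3_proper r' pt).
exact: reconf3_trans r (reconf3_trans r1 (reconf3_sym r')).
Qed.

Lemma reconf3_connected A B D s t : 3 <= #|A| -> 3 <= #|B| -> 3 <= #|D| ->
  ~~ [&& A == B, B == D & #|A| == 3] ->
  proper3 A B D s -> proper3 A B D t -> reconf3 A B D s t.
Proof.
case: s t => [[x y] z] [[x' y'] z'] hA hB hD not_rigid ps pt.
have [sDA|/subsetPn[d hd ndA]] := boolP (D \subset A); last first.
  exact: reconf3_outside hA hB hd ndA ps pt.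
have [sDB|/subsetPn[d hd ndB]] := boolP (D \subset B); last first.
  apply: reconf3_swap12; apply: (reconf3_outside hB hA hd ndB);
    by rewrite -proper3_swap12.
have [sAD|/subsetPn[d hd ndD]] := boolP (A \subset D); last first.
  apply: reconf3_swap13; apply: (reconf3_outside hD hB hd ndD);
    by rewrite -proper3_swap13.
have [sBD|/subsetPn[d hd ndD]] := boolP (B \subset D); last first.
  apply/reconf3_swap23/reconf3_swap12; apply: (reconf3_outside hD hA hd ndD);
    by rewrite -proper3_swap12 -proper3_swap23.
have eAD : A = D by apply/eqP; rewrite eqEsubset sAD sDA.
have eBD : B = D by apply/eqP; rewrite eqEsubset sBD sDB.
subst A B; apply: reconf3_large => //.
by move: not_rigid; rewrite !eqxx /= ltn_neqAle eq_sym => ->.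
Qed.

End Triangle.

Section Recolouring.
Variables (T C : finType) (e : rel T) (L : T -> {set C}).
Implicit Types (phi psi chi : T -> C) (w : T) (x : C).

Lemma reconf_trans phi psi chi :
  reconf e L phi psi -> reconf e L psi chi -> reconf e L phi chi.
Proof. exact: rt_trans. Qed.

Lemma reconf_sym phi psi : reconf e L phi psi -> reconf e L psi phi.
Proof.
apply: clos_rt_sym => phi' psi' [c [c' [w same]]]; split=> //; split=> //.
by exists w => u /same.
Qed.

Lemma reconf_colouring phi psi :
  reconf e L phi psi -> L_colouring e L phi -> L_colouring e L psi.
Proof. by apply: (clos_rt_inv (I := L_colouring e L)) => ? ? [_ []]. Qed.

Lemma not_frozenP phi w :
  ~ frozen e L phi w <-> exists x, [/\ x \in L w, x != phi w & forall u, e w u -> phi u != x].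
Proof.
split=> [not_frozen | [x [hx nx free]] frz]; last first.
  by have [u [/free]] := frz x hx nx => /[swap] ->; rewrite eqxx.
apply: NNPP => no_free; apply: not_frozen => c hc nc.
apply: NNPP => no_nbr; apply: no_free; exists c; split=> // u hu.
by apply/eqP => ec; apply: no_nbr; exists u.
Qed.

Hypothesis e_simple : simple_graph e.

Lemma colouring_recolour phi w x : L_colouring e L phi -> x \in L w ->
  (forall u, e w u -> phi u != x) -> L_colouring e L [eta phi with w |-> x].
Proof.
case: e_simple => e_sym e_irr [inL proper] hx free; split=> [u|u1 u2 e12] /=.
  by case: (u =P w) => [->|].
case: (u1 =P w) => [e1|n1]; case: (u2 =P w) => [e2|n2].
- by move: e12; rewrite e1 e2 e_irr.
- by rewrite eq_sym free // -e1.
- by rewrite free // e_sym -e2.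
- exact: proper.
Qed.

Lemma reconf_recolour phi w x : L_colouring e L phi -> x \in L w ->
  (forall u, e w u -> phi u != x) -> reconf e L phi [eta phi with w |-> x].
Proof.
move=> c hx free; apply: rt_step; split=> //; split; first exact: colouring_recolour.
by exists w => u /= /negbTE ->.
Qed.

End Recolouring.

Definition paw_adj (n m : nat) : bool :=
  [|| (n < 3) && (m < 3) && (n != m), (3 <= m) && (n.+1 == m) | (3 <= n) && (m.+1 == n)].

Section Paw.
Variables (k : nat) (T : finType) (e : rel T).
Hypothesis e_simple : simple_graph e.
Variables (f : 'I_(k + 4) -> T) (g : T -> 'I_(k + 4)).
Hypotheses (fK : cancel f g) (gK : cancel g f).
Hypothesis e_paw : forall i j, e (f i) (f j) = paw_sub_adj i j.
Variables (C : finType) (L : T -> {set C}).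
Hypothesis L_large : forall u, deg e u + 1 <= #|L u|.

Local Notation N := (k + 4).
Local Notation colouring := (L_colouring e L).

Fact lt0N : 0 < N. Proof. exact: ltn_addl. Qed.
Fact lt1N : 1 < N. Proof. exact: ltn_addl. Qed.
Fact lt2N : 2 < N. Proof. exact: ltn_addl. Qed.
Fact lt3N : 3 < N. Proof. exact: ltn_addl. Qed.
Local Hint Resolve lt0N lt1N lt2N lt3N : core.

(* Indices n >= N give the junk value vtx 0. *)
Definition vtx (n : nat) : T := f (insubd (Ordinal lt0N) n).

Lemma vtxK n : n < N -> val (g (vtx n)) = n.
Proof. by move=> ltnN; rewrite /vtx fK insubdK. Qed.

Lemma eq_vtx n m : n < N -> m < N -> (vtx n == vtx m) = (n == m).
Proof.
move=> ltnN ltmN; apply/eqP/eqP => [evtx|-> //].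
by rewrite -(vtxK ltnN) -(vtxK ltmN) evtx.
Qed.

Lemma vtx_onto u : exists2 n, n < N & u = vtx n.
Proof. by exists (val (g u)); rewrite ?ltn_ord // /vtx valKd gK. Qed.

Lemma adj_vtx n m : n < N -> m < N -> e (vtx n) (vtx m) = paw_adj n m.
Proof. by move=> ltnN ltmN; rewrite /vtx e_paw /paw_sub_adj -val_eqE /= !insubdK. Qed.

Lemma vtx_nbr n u : n < N -> e (vtx n) u -> exists2 m, m < N & paw_adj n m /\ u = vtx m.
Proof. by move=> ltnN; have [m ltmN ->] := vtx_onto u; rewrite adj_vtx // => adj; exists m. Qed.

Lemma vtx_ext (phi psi : T -> C) :
  (forall n, n < N -> phi (vtx n) = psi (vtx n)) -> phi = psi.
Proof.
move=> same; apply: functional_extensionality => u.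
by have [n ltnN ->] := vtx_onto u; apply: same.
Qed.

Lemma recolour_vtxE (phi : T -> C) n m x : n < N -> m < N ->
  [eta phi with vtx n |-> x] (vtx m) = if m == n then x else phi (vtx m).
Proof. by move=> ltnN ltmN /=; rewrite eq_vtx. Qed.

Lemma colouring_adj phi n m : colouring phi -> n < N -> m < N -> paw_adj n m ->
  phi (vtx n) != phi (vtx m).
Proof. by move=> [_ proper] ltnN ltmN adj; apply: proper; rewrite adj_vtx. Qed.

Lemma reconf_recolour_vtx phi n x : colouring phi -> n < N -> x \in L (vtx n) ->
  (forall m, m < N -> paw_adj n m -> phi (vtx m) != x) ->
  reconf e L phi [eta phi with vtx n |-> x] /\ colouring [eta phi with vtx n |-> x].
Proof.
move=> c ltnN hx free.
have free' u : e (vtx n) u -> phi u != x.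
  by case/(vtx_nbr ltnN) => m ltmN [adj ->]; apply: free.
by split; [apply: reconf_recolour | apply: colouring_recolour].
Qed.

Lemma card_L_vtx n (s : seq nat) : n < N -> uniq s ->
  (forall m, m \in s -> (m < N) && paw_adj n m) -> size s < #|L (vtx n)|.
Proof.
move=> ltnN uniq_s nbr_s; apply: leq_trans (L_large _); rewrite addn1 ltnS /deg.
have uniq_vs : uniq (map vtx s).
  rewrite map_inj_in_uniq // => a b /nbr_s/andP[ltaN _] /nbr_s/andP[ltbN _] /eqP.
  by rewrite eq_vtx // => /eqP.
rewrite -(size_map vtx) -(card_uniqP uniq_vs); apply/subset_leq_card/subsetP => u.
by case/mapP => m /nbr_s/andP[ltmN adj] ->; rewrite inE adj_vtx.
Qed.

Lemma card_L0 : 2 < #|L (vtx 0)|.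
Proof.
apply: (@card_L_vtx 0 [:: 1; 2]) => //.
by move=> m; rewrite !inE /paw_adj => /orP[] /eqP ->; lia.
Qed.

Lemma card_L1 : 2 < #|L (vtx 1)|.
Proof.
apply: (@card_L_vtx 1 [:: 0; 2]) => //.
by move=> m; rewrite !inE /paw_adj => /orP[] /eqP ->; lia.
Qed.

Lemma card_L2 : 3 < #|L (vtx 2)|.
Proof.
apply: (@card_L_vtx 2 [:: 0; 1; 3]) => //.
by move=> m; rewrite !inE /paw_adj => /or3P[] /eqP ->; lia.
Qed.

Lemma card_L_path n : 3 <= n -> n.+1 < N -> 2 < #|L (vtx n)|.
Proof.
move=> le3n ltn1N; apply: (@card_L_vtx n [:: n.-1; n.+1]) => //; first lia.
  by rewrite /= inE; lia.
by move=> m; rewrite !inE /paw_adj => /orP[] /eqP ->; lia.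
Qed.

Local Notation tri_proper q := (proper3 (L (vtx 0)) (L (vtx 1)) (L (vtx 2) :\ q)).
Local Notation tri_reconf q := (reconf3 (L (vtx 0)) (L (vtx 1)) (L (vtx 2) :\ q)).

Definition triangle (phi : T -> C) : C * C * C := (phi (vtx 0), phi (vtx 1), phi (vtx 2)).

Definition set_triangle (phi : T -> C) (t : C * C * C) : T -> C :=
  [eta phi with vtx 0 |-> t.1.1, vtx 1 |-> t.1.2, vtx 2 |-> t.2].

Definition rigid (q : C) : bool :=
  [&& L (vtx 0) == L (vtx 1), L (vtx 1) == L (vtx 2) :\ q & #|L (vtx 0)| == 3].

Lemma set_triangleE phi t n : n < N ->
  set_triangle phi t (vtx n) =
  if n == 0 then t.1.1 else if n == 1 then t.1.2 else if n == 2 then t.2 else phi (vtx n).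
Proof. by move=> ltnN; rewrite /set_triangle /= !eq_vtx //; lia. Qed.

Lemma set_triangle_tail phi t n : 3 <= n -> n < N -> set_triangle phi t (vtx n) = phi (vtx n).
Proof. by move=> le3n ltnN; rewrite set_triangleE // !ifN //; lia. Qed.

Lemma set_triangle_triangle phi psi :
  (forall n, 3 <= n -> n < N -> phi (vtx n) = psi (vtx n)) ->
  set_triangle phi (triangle psi) = psi.
Proof.
move=> same; apply: vtx_ext => n ltnN; rewrite set_triangleE //.
case: ifP => [/eqP -> //|n0]; case: ifP => [/eqP -> //|n1]; case: ifP => [/eqP -> //|n2].
by apply: same => //; lia.
Qed.

Lemma set_triangle_id phi : set_triangle phi (triangle phi) = phi.
Proof. exact: set_triangle_triangle. Qed.

Lemma triangle_set phi t : triangle (set_triangle phi t) = t.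
Proof. by case: t => [[x y] z]; rewrite /triangle !set_triangleE //=; lia. Qed.

Lemma set_triangle_set phi t t' : set_triangle (set_triangle phi t) t' = set_triangle phi t'.
Proof.
apply: vtx_ext => n ltnN; rewrite !set_triangleE //.
by case: (n == 0); case: (n == 1); case: (n == 2).
Qed.

Lemma triangle_proper phi : colouring phi -> tri_proper (phi (vtx 3)) (triangle phi).
Proof.
move=> c; have [inL _] := c.
by apply: proper3I; rewrite ?inE ?inL ?andbT //; apply: colouring_adj => //; lia.
Qed.

Lemma colouring_set_triangle phi x y z : colouring phi ->
  tri_proper (phi (vtx 3)) (x, y, z) -> colouring (set_triangle phi (x, y, z)).
Proof.
move=> c /proper3P[hx hy /setD1P[nzq hz] nxy /andP[nxz nyz]]; have [inL _] := c.
split=> [u|u1 u2].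
  have [n ltnN ->] := vtx_onto u; rewrite set_triangleE //.
  by do 3?case: ifP => [/eqP -> //|_].
have [n ltnN ->] := vtx_onto u1; have [m ltmN ->] := vtx_onto u2; rewrite adj_vtx // => adj.
have [lt3n|le3n] := ltnP n 3; have [lt3m|le3m] := ltnP m 3.
- rewrite !set_triangleE //; move: adj.
  case: n lt3n {ltnN} => [|[|[|]]] // _; case: m lt3m {ltmN} => [|[|[|]]] //= _ _;
    by rewrite // eq_sym.
- rewrite set_triangleE // (set_triangle_tail _ _ le3m) //.
  have [-> ->] : n = 2 /\ m = 3 by move: adj; rewrite /paw_adj; lia.
  by [].
- rewrite (set_triangle_tail _ _ le3n) // set_triangleE //.
  have [-> ->] : n = 3 /\ m = 2 by move: adj; rewrite /paw_adj; lia.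
  by rewrite eq_sym.
- by rewrite !set_triangle_tail //; apply: colouring_adj.
Qed.

Lemma set_triangle_step phi s t : triangle phi = s -> agree2 s t ->
  exists w, forall u, u != w -> phi u = set_triangle phi t u.
Proof.
move=> <- same; rewrite -{1}(set_triangle_id phi).
case: same => -[e1 e2]; [exists (vtx 2) | exists (vtx 1) | exists (vtx 0)] => u;
  have [n ltnN ->] := vtx_onto u; rewrite eq_vtx // !set_triangleE // e1 e2;
  by move/negPf->.
Qed.

Lemma reconf_set_triangle q s t : tri_reconf q s t ->
  forall phi, colouring phi -> phi (vtx 3) = q -> triangle phi = s ->
  reconf e L phi (set_triangle phi t).
Proof.
elim=> [s1 t1 [_ pt1 same]|s1|s1 m1 t1 _ IH1 _ IH2] phi c e3 es1.
- case: t1 pt1 same => [[x y] z] pt1 same; apply: rt_step; split=> //.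
  split; first by apply: colouring_set_triangle; rewrite // e3.
  exact: set_triangle_step es1 same.
- by rewrite -es1 set_triangle_id; apply: rt_refl.
- have r1 := IH1 phi c e3 es1.
  have r2 := IH2 _ (reconf_colouring r1 c) _ (triangle_set phi m1).
  rewrite set_triangle_set set_triangle_tail // e3 in r2.
  exact: reconf_trans r1 (r2 erefl).
Qed.

Lemma reconf_triangle phi t : colouring phi -> ~~ rigid (phi (vtx 3)) ->
  tri_proper (phi (vtx 3)) t -> reconf e L phi (set_triangle phi t).
Proof.
move=> c flexible pt; apply: (reconf_set_triangle _ c (erefl _) (erefl _)).
apply: (reconf3_connected card_L0 card_L1 _ flexible (triangle_proper c) pt).
have := card_L2; rewrite (cardsD1 (phi (vtx 3))); case: (_ \in _) => /=; lia.
Qed.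

Lemma rigid_in q : rigid q -> q \in L (vtx 2).
Proof.
case/and3P => /eqP e01 /eqP e12 /eqP card0; apply: contraTT card_L2 => nq.
by rewrite -ltnNge (cardsD1 q) (negbTE nq) -e12 -e01 card0.
Qed.

Lemma rigid_unique q q' : rigid q -> rigid q' -> q = q'.
Proof.
move=> rq rq'; apply/eqP; apply: contraT => nqq'.
move: (rq) (rq') => /and3P[_ /eqP e1q _] /and3P[_ /eqP e1q' _].
have : q \in L (vtx 2) :\ q' by rewrite in_setD1 nqq' rigid_in.
by rewrite -e1q' e1q in_setD1 eqxx.
Qed.

Lemma rigid_triangle_frozen phi n : colouring phi -> rigid (phi (vtx 3)) -> n <= 2 ->
  frozen e L phi (vtx n).
Proof.
move=> c rig le2n col hcol ncol; have [inL _] := c.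
have /and3P[/eqP e01 /eqP e12 /eqP card0] := rig.
have ltnN : n < N by lia.
have nbr m : m <= 2 -> phi (vtx m) != phi (vtx n) ->
    exists u, e (vtx n) u /\ phi u = phi (vtx m).
  move=> le2m nmn; have : m != n by apply: contra_neq nmn => ->.
  by exists (vtx m); split; rewrite // adj_vtx /paw_adj; lia.
have : (n = 2 /\ col = phi (vtx 3)) \/ col \in L (vtx 0).
  move: le2n hcol; rewrite leq_eqVlt ltnS leq_eqVlt ltnS leqn0.
  case/or3P=> /eqP-> hcol; [|by right; rewrite e01 | by right].
  have [-> | ncq] := eqVneq col (phi (vtx 3)); [by left | right].
  by rewrite e01 e12 in_setD1 ncq.
case=> [[-> ->]|hcol0]; first by exists (vtx 3); rewrite adj_vtx.
have a1 : phi (vtx 1) \in L (vtx 0) by rewrite e01.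
have a2 : phi (vtx 2) \in L (vtx 0).
  by rewrite e01 e12 in_setD1 inL andbT; apply: colouring_adj.
have u012 : uniq [:: phi (vtx 0); phi (vtx 1); phi (vtx 2)].
  by rewrite /= !inE !negb_or !colouring_adj.
have := card_le3_mem (eq_leq card0) (inL _) a1 a2 u012 hcol0.
by rewrite !inE => /or3P[] /eqP ecol; rewrite ecol; apply: nbr; rewrite // -ecol.
Qed.

Lemma path_adj n m : paw_adj n m -> 3 <= n -> m = n.-1 \/ m = n.+1.
Proof. by rewrite /paw_adj; lia. Qed.

Lemma reconf_change_v3 n phi : colouring phi -> n.+3 < N ->
  ~ frozen e L phi (vtx n.+3) ->
  exists2 psi, reconf e L phi psi /\ colouring psi & psi (vtx 3) != phi (vtx 3).
Proof.
elim: n phi => [|n IH] phi c ltN nfrz.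
  have [x [hx nx free]] := (not_frozenP _ _ _ _).1 nfrz.
  exists [eta phi with vtx 3 |-> x]; last by rewrite /= eqxx.
  by split; [apply: reconf_recolour | apply: colouring_recolour].
have ltN' : n.+3 < N by lia.
have [frz|] := classic (frozen e L phi (vtx n.+3)); last exact: IH.
have [y [hy ny free]] := (not_frozenP _ _ _ _).1 nfrz.
pose phi1 := [eta phi with vtx n.+4 |-> y].
have r1 : reconf e L phi phi1 by apply: reconf_recolour.
have c1 : colouring phi1 by apply: colouring_recolour.
(* Since v(n+3) is frozen, a colour a of its list unused on v(n+3) and v(n+2)
   sits on v(n+4); once v(n+4) has moved to y, v(n+3) can take a. *)
have card3 := @card_L_path n.+3 isT ltN.
have [a ha] := exists_avoiding (s := [:: phi (vtx n.+3); phi (vtx n.+2)]) card3.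
rewrite !inE negb_or => /andP[na3 na2].
have [_ [/(vtx_nbr ltN') [m ltmN [adj ->]] ea]] := frz a ha na3.
have em : m = n.+4 by case: (path_adj adj isT) => // em; move: na2; rewrite -ea em eqxx.
have nfrz1 : ~ frozen e L phi1 (vtx n.+3).
  apply/not_frozenP; exists a; split=> //; first by rewrite recolour_vtxE // ifN //; lia.
  move=> u /(vtx_nbr ltN') [m' ltm'N [adj' ->]]; rewrite recolour_vtxE //.
  case: (path_adj adj' isT) => ->; last by rewrite eqxx -ea em.
  by rewrite ifN 1?eq_sym //; lia.
have [psi [r2 c2] npsi] := IH phi1 c1 ltN' nfrz1.
exists psi; first by split=> //; apply: reconf_trans r1 r2.
by rewrite recolour_vtxE in npsi.
Qed.

Definition flexible (phi : T -> C) : Prop := colouring phi /\ ~~ rigid (phi (vtx 3)).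

Lemma reach_flexible alpha : colouring alpha -> unfrozen e L alpha ->
  exists2 alpha', reconf e L alpha alpha' & flexible alpha'.
Proof.
move=> c [w nfrz]; have [rig|] := boolP (rigid (alpha (vtx 3))); last first.
  by exists alpha; first apply: rt_refl.
have [n ltnN ew] := vtx_onto w; subst w.
have [le2n|lt2n] := leqP n 2; first by case: nfrz; apply: rigid_triangle_frozen.
move: ltnN nfrz; have -> : n = (n - 3).+3 by lia.
move=> ltnN /(reconf_change_v3 c ltnN) [psi [r_psi c_psi] n3].
by exists psi => //; split=> //; apply: contra n3 => /rigid_unique/(_ rig) ->.
Qed.

Lemma exists_triangle_avoiding q a b : exists2 t, tri_proper q t & t.2 \notin [:: a; b].
Proof.
have [z hz] := exists_avoiding (s := [:: q; a; b]) card_L2.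
rewrite !inE !negb_or => /and3P[nzq nza nzb].
have [x hx] := exists_avoiding (s := [:: z]) (ltnW card_L0); rewrite inE => nxz.
have [y hy] := exists_avoiding (s := [:: x; z]) card_L1.
rewrite !inE negb_or => /andP[nyx nyz].
exists (x, y, z); last by rewrite !inE negb_or nza.
by apply: proper3I; rewrite ?in_setD1 ?nzq // eq_sym.
Qed.

Lemma adj3 m : paw_adj 3 m -> m = 2 \/ m = 4.
Proof. by move/path_adj; apply. Qed.

Lemma adj4 m : paw_adj 4 m -> m = 3 \/ m = 5.
Proof. by move/path_adj; apply. Qed.

Lemma reconf_recolour34 rho q x c : flexible rho -> 4 < N ->
  q \in L (vtx 3) -> q != rho (vtx 4) -> x \in L (vtx 4) -> x != q ->
  (forall m, 5 <= m -> m < N -> paw_adj 4 m -> rho (vtx m) != x) ->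
  exists2 rho', [/\ reconf e L rho rho', colouring rho', rho' (vtx 2) != c,
                    rho' (vtx 3) = q & rho' (vtx 4) = x] &
    forall m, 5 <= m -> m < N -> rho' (vtx m) = rho (vtx m).
Proof.
move=> [c0 flex] lt4N hq nq4 hx nxq free.
have [[[x0 y0] z] pt /=] := exists_triangle_avoiding (rho (vtx 3)) q c.
rewrite !inE negb_or => /andP[nzq nzc].
pose rho1 := set_triangle rho (x0, y0, z).
have r1 : reconf e L rho rho1 := reconf_triangle c0 flex pt.
have c1 : colouring rho1 := colouring_set_triangle c0 pt.
have rho1E m : 3 <= m -> m < N -> rho1 (vtx m) = rho (vtx m) := @set_triangle_tail _ _ m.
have rho1_2 : rho1 (vtx 2) = z by rewrite /rho1 set_triangleE.
have free3 m : m < N -> paw_adj 3 m -> rho1 (vtx m) != q.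
  by move=> ltmN /adj3[] ->; rewrite ?rho1_2 // rho1E // eq_sym.
have [r2 c2] := reconf_recolour_vtx c1 lt3N hq free3.
pose rho2 := [eta rho1 with vtx 3 |-> q].
have free4 m : m < N -> paw_adj 4 m -> rho2 (vtx m) != x.
  move=> ltmN /adj4[] em; subst m; first by rewrite /= eqxx eq_sym.
  by rewrite /rho2 recolour_vtxE // rho1E //=; apply: free.
have [r3 c3] := reconf_recolour_vtx c2 lt4N hx free4.
exists [eta rho2 with vtx 4 |-> x].
  split=> //; rewrite ?recolour_vtxE //= ?eqxx //.
  - exact: reconf_trans r1 (reconf_trans r2 r3).
  - by rewrite rho1_2.
move=> m le5m ltmN; rewrite !recolour_vtxE // !ifN ?rho1E //; lia.
Qed.

Definition tail_recolourable (i : nat) : Prop :=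
  forall rho j x, flexible rho -> i <= j -> j < N -> x \in L (vtx j) ->
  (forall m, i <= m -> m < N -> paw_adj j m -> rho (vtx m) != x) ->
  exists2 rho', [/\ reconf e L rho rho', flexible rho' & rho' (vtx j) = x] &
    forall m, i <= m -> m < N -> m != j -> rho' (vtx m) = rho (vtx m).

Lemma v3_colour_choice x y : 4 < N -> x != y ->
  (exists q, [/\ q \in L (vtx 3), q \notin [:: x; y] & ~~ rigid q]) \/
  [/\ y \in L (vtx 3), ~~ rigid y & exists2 q, q \in L (vtx 3) & q \notin [:: x; y]].
Proof.
move=> lt4N nxy; have card3 := @card_L_path 3 isT lt4N.
have [q hq nq] := exists_avoiding (s := [:: x; y]) card3.
have [rig|] := boolP (rigid q); last by left; exists q.
have [hy|ny] := boolP (y \in L (vtx 3)).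
  right; split=> //; last by exists q.
  by apply: contra nq => /rigid_unique/(_ rig) <-; rewrite !inE eqxx orbT.
have [q' hq' nq'] := exists_avoiding (s := [:: x; q]) card3.
left; exists q'; move: nq'; rewrite !inE !negb_or => /andP[-> nq'q]; split=> //.
  by apply: contraNneq ny => <-.
by apply: contra nq'q => /rigid_unique/(_ rig) ->.
Qed.

Lemma tail_recolourable4_blocked rho x : flexible rho -> 4 < N -> rho (vtx 3) = x ->
  x \in L (vtx 4) -> (forall m, 5 <= m -> m < N -> paw_adj 4 m -> rho (vtx m) != x) ->
  exists2 rho', [/\ reconf e L rho rho', flexible rho' & rho' (vtx 4) = x] &
    forall m, 5 <= m -> m < N -> rho' (vtx m) = rho (vtx m).
Proof.
move=> fl lt4N e3 hx free; have [c _] := fl.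
have nx4 : x != rho (vtx 4) by rewrite -e3 colouring_adj.
case: (v3_colour_choice lt4N nx4) => [[q [hq nq flex_q]] | [h4 flex4 [q hq nq]]];
  move: nq; rewrite !inE !negb_or => /andP[nqx nq4].
  have nxq : x != q by rewrite eq_sym.
  have [rho' [r c' _ e3' e4'] same] := reconf_recolour34 q fl lt4N hq nq4 hx nxq free.
  by exists rho' => //; split=> //; split; rewrite // e3'.
have nxq : x != q by rewrite eq_sym.
have [rho1 [r1 c1 n2 e3' e4'] same] :=
  reconf_recolour34 (rho (vtx 4)) fl lt4N hq nq4 hx nxq free.
have free3 m : m < N -> paw_adj 3 m -> rho1 (vtx m) != rho (vtx 4).
  by move=> ltmN /adj3[] ->; rewrite // e4'.
have [r2 c2] := reconf_recolour_vtx c1 lt3N h4 free3.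
exists [eta rho1 with vtx 3 |-> rho (vtx 4)].
  split; first exact: reconf_trans r1 r2.
  - by split=> //=; rewrite eqxx.
  - by rewrite recolour_vtxE.
by move=> m le5m ltmN; rewrite recolour_vtxE // ifN ?same //; lia.
Qed.

Lemma tail_recolourable4 : tail_recolourable 4.
Proof.
move=> rho j x fl le4j ltjN hx free; have [c flex] := fl.
wlog free' : / forall m, m < N -> paw_adj j m -> rho (vtx m) != x.
  move=> easy; have [e3|n3] := eqVneq (rho (vtx 3)) x; last first.
    apply: easy => m ltmN adj; have [le4m|lt4m] := leqP 4 m; first exact: free.
    by have -> : m = 3 by move: adj; rewrite /paw_adj; lia.
  have [ej|nj] := eqVneq j 4; last first.
    apply: easy => m ltmN adj; have [le4m|lt4m] := leqP 4 m; first exact: free.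
    by move: adj; rewrite /paw_adj; lia.
  subst j; have free5 m : 5 <= m -> m < N -> paw_adj 4 m -> rho (vtx m) != x.
    by move/ltnW; apply: free.
  have [rho' [r fl' e4] same] := tail_recolourable4_blocked fl ltjN e3 hx free5.
  by exists rho' => // m le4m ltmN nm4; apply: same => //; lia.
have [r c'] := reconf_recolour_vtx c ltjN hx free'.
exists [eta rho with vtx j |-> x]; last first.
  by move=> m _ ltmN nmj; rewrite recolour_vtxE // (negbTE nmj).
split=> //; last by rewrite recolour_vtxE // eqxx.
by split=> //; rewrite recolour_vtxE // ifN //; lia.
Qed.

Lemma tail_recolourable_succ i : 4 <= i -> tail_recolourable i -> tail_recolourable i.+1.
Proof.
move=> le4i IH rho j x fl ltij ltjN hx free.
wlog free' : / forall m, i <= m -> m < N -> paw_adj j m -> rho (vtx m) != x.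
  move=> easy; have [ei|ni] := eqVneq (rho (vtx i)) x; last first.
    apply: easy => m lim ltmN adj; have [->|nmi] := eqVneq m i; first by [].
    by apply: free => //; lia.
  have [ej|nj] := eqVneq j i.+1; last first.
    apply: easy => m lim ltmN adj; have [emi|nmi] := eqVneq m i; last by apply: free => //; lia.
    by move: adj; rewrite emi /paw_adj; lia.
  subst j; have ltiN : i < N by lia.
  have le3i : 3 <= i := ltnW le4i.
  have [h hh] := exists_avoiding (s := [:: x; rho (vtx i.+1)]) (card_L_path le3i ltjN).
  rewrite !inE negb_or => /andP[nhx nh1].
  have free_h m : i <= m -> m < N -> paw_adj i m -> rho (vtx m) != h.
    by move=> lim ltmN /path_adj/(_ le3i) [|->]; [lia | rewrite eq_sym].
  have [rho1 [r1 fl1 e1] same1] := IH rho i h fl (leqnn i) ltiN hh free_h.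
  have free_x m : i <= m -> m < N -> paw_adj i.+1 m -> rho1 (vtx m) != x.
    move=> lim ltmN /path_adj/(_ (leqW le3i)) [/= em|em]; subst m; first by rewrite e1.
    by rewrite same1 //; try lia; apply: free => //; rewrite /paw_adj; lia.
  have [rho2 [r2 fl2 e2] same2] := IH rho1 i.+1 x fl1 (leqnSn i) ltjN hx free_x.
  exists rho2; first by split=> //; apply: reconf_trans r1 r2.
  by move=> m lim ltmN nm; rewrite same2 ?same1 //; lia.
have [rho' [r fl' ej] same] := IH rho j x fl (ltnW ltij) ltjN hx free'.
by exists rho' => // m lim ltmN nmj; apply: same => //; lia.
Qed.

Lemma tail_recolourable_ge4 i : 4 <= i -> tail_recolourable i.
Proof.
elim: i => // i IH; rewrite leq_eqVlt => /orP[/eqP <-|lt4i]; first exact: tail_recolourable4.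
exact: tail_recolourable_succ (IH lt4i).
Qed.

Lemma reconf_match_tail tau rho n : colouring tau -> flexible rho ->
  exists2 rho', reconf e L rho rho' /\ flexible rho' &
    forall m, N - n <= m -> 4 <= m -> m < N -> rho' (vtx m) = tau (vtx m).
Proof.
move=> ctau; elim: n rho => [|n IH] rho fl.
  by exists rho => [|m]; [split=> //; apply: rt_refl | lia].
have [rho1 [r1 fl1] same1] := IH rho fl.
have [lt4i|le4i] := ltnP (N - n.+1) 4.
  by exists rho1 => // m lem le4m ltmN; apply: same1 => //; lia.
set i := N - n.+1 in le4i *; have ltiN : i < N by rewrite /i; lia.
have free m : i <= m -> m < N -> paw_adj i m -> rho1 (vtx m) != tau (vtx i).
  move=> lim ltmN /path_adj/(_ (ltnW le4i)) [|em]; first lia.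
  subst m; have -> : rho1 (vtx i.+1) = tau (vtx i.+1).
    by apply: same1 => //; rewrite /i; lia.
  by rewrite eq_sym; apply: colouring_adj => //; rewrite /paw_adj; lia.
have [rho2 [r2 fl2 e2] same2] :=
  tail_recolourable_ge4 le4i fl1 (leqnn i) ltiN (ctau.1 _) free.
exists rho2; first by split=> //; apply: reconf_trans r1 r2.
move=> m lim le4m ltmN; have [->|nmi] := eqVneq m i; first exact: e2.
by rewrite same2 // same1 //; rewrite /i in lim nmi *; lia.
Qed.

Lemma reconf_flexible rho tau : flexible rho -> flexible tau -> reconf e L rho tau.
Proof.
move=> fl [ctau flex_tau].
have [rho1 [r1 [c1 flex1]] same1] := reconf_match_tail k ctau fl.
have tail1 m : 4 <= m -> m < N -> rho1 (vtx m) = tau (vtx m).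
  by move=> le4m ltmN; apply: same1 => //; lia.
have [[[x y] z] pt /=] := exists_triangle_avoiding (rho1 (vtx 3)) (tau (vtx 3)) (tau (vtx 3)).
rewrite !inE orbb => nz3.
pose rho2 := set_triangle rho1 (x, y, z).
have r2 : reconf e L rho1 rho2 := reconf_triangle c1 flex1 pt.
have c2 : colouring rho2 := colouring_set_triangle c1 pt.
have free3 m : m < N -> paw_adj 3 m -> rho2 (vtx m) != tau (vtx 3).
  move=> ltmN /adj3[] em; subst m; first by rewrite /rho2 set_triangleE.
  by rewrite /rho2 set_triangle_tail // tail1 // colouring_adj.
have [r3 c3] := reconf_recolour_vtx c2 lt3N (ctau.1 _) free3.
pose rho3 := [eta rho2 with vtx 3 |-> tau (vtx 3)].
have e3 : rho3 (vtx 3) = tau (vtx 3) by rewrite /= eqxx.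
have flex3 : ~~ rigid (rho3 (vtx 3)) by rewrite e3.
have pt4 : tri_proper (rho3 (vtx 3)) (triangle tau) by rewrite e3; apply: triangle_proper.
have r4 := reconf_triangle c3 flex3 pt4.
rewrite set_triangle_triangle in r4; last first.
  move=> n le3n ltnN; have [->|n3] := eqVneq n 3; first exact: e3.
  by rewrite recolour_vtxE // (negbTE n3) /rho2 set_triangle_tail // tail1 //; lia.
exact: reconf_trans r1 (reconf_trans r2 (reconf_trans r3 r4)).
Qed.

End Paw.

Theorem mainTheorem16 (k : nat) (T : finType) (e : rel T)
  (Hg : simple_graph e)
  (f : 'I_(k + 4) -> T) (Hf : bijective f)
  (Hiso : forall i j, e (f i) (f j) = paw_sub_adj i j)
  (C : finType) (L : T -> {set C})
  (HL : forall v, deg e v + 1 <= #|L v|)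
  (alpha beta : T -> C)
  (Ha : L_colouring e L alpha) (Hb : L_colouring e L beta)
  (Hau : unfrozen e L alpha) (Hbu : unfrozen e L beta) :
  reconf e L alpha beta.
Proof.
have [g fK gK] := Hf.
have [alpha' r_alpha fl_alpha] := reach_flexible Hg fK gK Hiso HL Ha Hau.
have [beta' r_beta fl_beta] := reach_flexible Hg fK gK Hiso HL Hb Hbu.
have r := reconf_flexible Hg fK gK Hiso HL fl_alpha fl_beta.
exact: reconf_trans r_alpha (reconf_trans r (reconf_sym r_beta)).
Qed.
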